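(* Let $\widehat{\mathbf{H}}_u,\mathbf{L}_1\in\mathbb{R}^{N_s\times N_b}$, $\lambda>0$, $\gamma_u\ge0$, $\beta_u\in\mathbb{R}$, $\mu_0>0$, $\rho>1$, $\mu_{\max}\ge\mu_0$. Let $f(\mathbf{L})=\|\mathbf{L}\|_*+\gamma_u\|\mathbf{L}-\beta_u\mathbf{L}_1\|_F^2$ and $g(\mathbf{S})=\lambda\|\mathbf{S}\|_1$, and consider the sequence $\{(\mathbf{L}_u^k,\mathbf{S}_u^k,\mathbf{Y}^k)\}_{k\ge0}$ generated from $\mathbf{S}_u^0=\mathbf{0}$, $\mathbf{Y}^0=\mathbf{0}$ by $$\mathbf{L}_u^{k+1}=\arg\min_{\mathbf{L}} f(\mathbf{L})+\tfrac{\mu_k}{2}\bigl\|\mathbf{L}-(\widehat{\mathbf{H}}_u-\mathbf{S}_u^k+\tfrac{1}{\mu_k}\mathbf{Y}^k)\bigr\|_F^2,$$ $$\mathbf{S}_u^{k+1}=\arg\min_{\mathbf{S}} g(\mathbf{S})+\tfrac{\mu_k}{2}\bigl\|\mathbf{S}-(\widehat{\mathbf{H}}_u-\mathbf{L}_u^{k+1}+\tfrac{1}{\mu_k}\mathbf{Y}^k)\bigr\|_F^2,$$ $$\mathbf{Y}^{k+1}=\mathbf{Y}^k+\mu_k(\widehat{\mathbf{H}}_u-\mathbf{L}_u^{k+1}-\mathbf{S}_u^{k+1}),\qquad \mu_{k+1}=\min\{\rho\mu_k,\mu_{\max}\}.$$ Then the sequence $\{(\mathbf{L}_u^k,\mathbf{S}_u^k)\}$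 is bounded.
   Context: $\|\cdot\|_*$ is the nuclear norm, $\|\cdot\|_1$ the entrywise $\ell_1$-norm, $\|\cdot\|_F$ the Frobenius norm. These iterations are the ADMM scheme for $\min_{\mathbf{L},\mathbf{S}} f(\mathbf{L})+g(\mathbf{S})$ subject to $\mathbf{L}+\mathbf{S}=\widehat{\mathbf{H}}_u$, with augmented Lagrangian $\mathcal{L}_\mu(\mathbf{L},\mathbf{S},\mathbf{Y})=f(\mathbf{L})+g(\mathbf{S})+\langle\mathbf{Y},\widehat{\mathbf{H}}_u-\mathbf{L}-\mathbf{S}\rangle+\frac{\mu}{2}\|\widehat{\mathbf{H}}_u-\mathbf{L}-\mathbf{S}\|_F^2$, $\langle\mathbf{A},\mathbf{B}\rangle=\mathrm{tr}(\mathbf{A}^\top\mathbf{B})$. *)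

From HB Require Import structures.
From mathcomp Require Import all_boot all_order all_algebra.
From mathcomp Require Import boolp classical_sets reals.
Set Implicit Arguments. Unset Strict Implicit. Unset Printing Implicit Defensive.
Import Order.TTheory GRing.Theory Num.Theory.
Local Open Scope ring_scope.

Section MatNorms.
Variables (R : realType) (m n : nat).

Definition is_svd (A : 'M[R]_(m, n)) (U : 'M[R]_m) (D : 'M[R]_(m, n))
    (V : 'M[R]_n) : Prop :=
  [/\ U^T *m U = 1%:M, V^T *m V = 1%:M,
      (forall (i : 'I_m) (j : 'I_n), (i : nat) != j -> D i j = 0),
      (forall (i : 'I_m) (j : 'I_n), 0 <= D i j) &
      A = U *m D *m V^T].

Definition svd_diag (A : 'M[R]_(m, n)) : 'M[R]_(m, n) :=
  xget 0 [set D | exists U V, is_svd A U D V].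

(* Nuclear norm: sum of the singular values. *)
Definition nucnorm (A : 'M[R]_(m, n)) : R :=
  \sum_(i < m) \sum_(j < n) svd_diag A i j.

Definition l1norm (A : 'M[R]_(m, n)) : R := \sum_(i < m) \sum_(j < n) `|A i j|.

Definition frob (A : 'M[R]_(m, n)) : R :=
  Num.sqrt (\sum_(i < m) \sum_(j < n) A i j ^+ 2).

End MatNorms.

(* The optimality conditions of the two proximal steps say that
   the multiplier Y^{k+1} has entries bounded by lambda and satisfies
   lambda |S^{k+1}|_1 <= <Y^{k+1}, S^{k+1}>, and that
   G^k = mu_k (Hu - S^k + Y^k / mu_k - L^{k+1}) - 2 gamma (L^{k+1} - beta L1)
   has entries bounded by 1 and <G^k, L^{k+1}> >= 0.  For the nuclear norm
   this uses its dual description as the maximum of <Q, X> over contractions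
   Q, which rests on the existence of a singular value decomposition,
   obtained from real eigenvectors of A^T A and Householder reflections.  Since
   mu_k >= mu0, the residual D^k = (Y^{k+1} - Y^k) / mu_k is bounded, and
   expanding 2 <mu_k (S^{k+1} - S^k), S^{k+1}> yields
   mu_k (|S^{k+1}|_F^2 - |S^k|_F^2) <= 2 (K - lambda |S^{k+1}|_1) for a
   constant K.  So |S^k|_F cannot grow once |S^{k+1}|_1 >= K / lambda, which
   keeps |S^k|_F <= K / lambda, and L^{k+1} = Hu - S^{k+1} - D^k is bounded
   too. *)

From HB Require Import structures.
From mathcomp Require Import all_boot all_order all_algebra.
From mathcomp Require Import boolp classical_sets reals.
From mathcomp Require Import complex spectral ring lra.
Import Order.TTheory GRing.Theory Num.Theory.
Local Open Scope ring_scope.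
Set Implicit Arguments.
Unset Strict Implicit.
Unset Printing Implicit Defensive.

Section RealSymmetric.
Variable R : realType.

Lemma trmx11 (M : 'M[R]_1) : M^T = M.
Proof. by apply/matrixP=> i j; rewrite mxE !ord1. Qed.

Lemma row_sqnorm_ge0 n (x : 'rV[R]_n) : 0 <= (x *m x^T) 0 0.
Proof. by rewrite mxE; apply: sumr_ge0 => i _; rewrite mxE -expr2 sqr_ge0. Qed.

Lemma row_sqnorm_gt0 n (x : 'rV[R]_n) : x != 0 -> 0 < (x *m x^T) 0 0.
Proof.
move=> x_neq0; have [j xj_neq0] : exists j, x 0 j != 0.
  apply/existsP; apply: contraR x_neq0; rewrite negb_exists => /forallP x0.
  by apply/eqP/rowP => j; rewrite mxE; apply/eqP; have := x0 j; rewrite negbK.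
rewrite mxE (bigD1 j) //= mxE ltr_pwDl -?expr2 ?exprn_even_gt0 //.
by apply: sumr_ge0 => i _; rewrite mxE -expr2 sqr_ge0.
Qed.

Lemma trmx_mulmx_eq0 m n (A : 'M[R]_(m, n)) : A^T *m A = 0 -> A = 0.
Proof.
move=> AtA0; apply/matrixP => i j; rewrite mxE.
have /eqP := congr1 (fun M : 'M[R]_n => M j j) AtA0; rewrite !mxE psumr_eq0.
  move=> /allP /(_ i (mem_index_enum i)).
  by rewrite mxE -expr2 sqrf_eq0 => /eqP.
by move=> k _; rewrite mxE -expr2 sqr_ge0.
Qed.

Lemma complexReD (x y : R[i]) :
  complex.Re (x + y) = complex.Re x + complex.Re y.
Proof. by case: x; case: y. Qed.

Lemma complexImD (x y : R[i]) :
  complex.Im (x + y) = complex.Im x + complex.Im y.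
Proof. by case: x; case: y. Qed.

Lemma complexReM (x y : R[i]) :
  complex.Re (x * y)
  = complex.Re x * complex.Re y - complex.Im x * complex.Im y.
Proof. by case: x => ? ?; case: y. Qed.

Lemma complexImM (x y : R[i]) :
  complex.Im (x * y)
  = complex.Re x * complex.Im y + complex.Im x * complex.Re y.
Proof. by case: x => ? ?; case: y. Qed.

(* A complex eigenvector [p + i q] of the real matrix [B] gives
   [p B = Re a p - Im a q] and [q B = Im a p + Re a q]; symmetry of [B]
   forces [Im a (|p|^2 + |q|^2) = 0]. *)
Lemma symmetric_row_eigenvector n (B : 'M[R]_n.+1) : B^T = B ->
  exists (x : 'rV[R]_n.+1) (e : R), x != 0 /\ x *m B = e *: x.
Proof.
move=> B_sym.
have [a /eigenvalueP [v vB v_neq0]] :=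
  eigenvalue_closed (map_mx (real_complex R) B) (ltn0Sn n).
pose p := map_mx (@complex.Re R) v; pose q := map_mx (@complex.Im R) v.
have ReS (I : finType) (F : I -> R[i]) :
  complex.Re (\sum_i F i) = \sum_i complex.Re (F i).
  by apply: (big_morph _ complexReD).
have ImS (I : finType) (F : I -> R[i]) :
  complex.Im (\sum_i F i) = \sum_i complex.Im (F i).
  by apply: (big_morph _ complexImD).
have pB : p *m B = complex.Re a *: p - complex.Im a *: q.
  apply/rowP => j.
  have vBj := congr1 (fun M : 'rV[R[i]]_n.+1 => complex.Re (M 0 j)) vB.
  rewrite /= !mxE ReS in vBj; rewrite !mxE -complexReM -vBj.
  by apply: eq_bigr => i _; rewrite !mxE complexReM /= mulr0 subr0.
have qB : q *m B = complex.Im a *: p + complex.Re a *: q.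
  apply/rowP => j.
  have vBj := congr1 (fun M : 'rV[R[i]]_n.+1 => complex.Im (M 0 j)) vB.
  rewrite /= !mxE ImS in vBj; rewrite !mxE addrC -complexImM -vBj.
  by apply: eq_bigr => i _; rewrite !mxE complexImM /= mulr0 add0r.
have pBq : p *m B *m q^T = q *m B *m p^T.
  by rewrite -[LHS]trmx11 !trmx_mul trmxK B_sym mulmxA.
have qp : q *m p^T = p *m q^T by rewrite -[LHS]trmx11 trmx_mul trmxK.
have pq_neq0 : p != 0 \/ q != 0.
  have [p0|] := eqVneq p 0; last by left.
  have [q0|] := eqVneq q 0; last by right.
  exfalso; move/negP: v_neq0; apply; apply/eqP/rowP => j.
  have := congr1 (fun M : 'rV[R]_n.+1 => M 0 j) p0.
  have := congr1 (fun M : 'rV[R]_n.+1 => M 0 j) q0.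
  by rewrite !mxE; case: (v 0 j) => /= ? ? -> ->.
have Im_a0 : complex.Im a = 0.
  move: pBq; rewrite pB qB !mulmxBl !mulmxDl -!scalemxAl qp => /eqP.
  rewrite -subr_eq0 => /eqP /(congr1 (fun M : 'M[R]_1 => M 0 0)); rewrite !mxE.
  move=> eq0; have : complex.Im a * ((p *m p^T) 0 0 + (q *m q^T) 0 0) = 0.
    rewrite !mxE; apply/eqP; rewrite -oppr_eq0; apply/eqP.
    by rewrite -[RHS]eq0; ring.
  move/eqP; rewrite mulf_eq0 paddr_eq0 ?row_sqnorm_ge0 // => /orP [/eqP //|].
  by case: pq_neq0 => /row_sqnorm_gt0 /gt_eqF ->; rewrite ?andbF.
rewrite Im_a0 scale0r subr0 in pB; rewrite Im_a0 scale0r add0r in qB.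
by case: pq_neq0 => ?; [exists p | exists q]; exists (complex.Re a).
Qed.

Lemma symmetric_eigenvector n (B : 'M[R]_n.+1) : B^T = B ->
  exists (v : 'cV[R]_n.+1) (e : R), v^T *m v = 1%:M /\ B *m v = e *: v.
Proof.
move=> B_sym; have [x [e [x_neq0 xB]]] := symmetric_row_eigenvector B_sym.
have s_gt0 := row_sqnorm_gt0 x_neq0; set s := (x *m x^T) 0 0 in s_gt0.
exists ((Num.sqrt s)^-1 *: x^T), e; split.
  rewrite [(_ *: _)^T]linearZ /= trmxK -scalemxAl -scalemxAr scalerA.
  rewrite [x *m x^T]mx11_scalar -/s scale_scalar_mx -invfM -expr2.
  by rewrite sqr_sqrtr ?ltW // mulVf ?gt_eqF.
have Bx : B *m x^T = e *: x^T.
  by rewrite -[B]B_sym -trmx_mul xB [(_ *: _)^T]linearZ.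
by rewrite -scalemxAr Bx !scalerA mulrC.
Qed.

End RealSymmetric.

Section SingularValueDecomposition.
Variable R : realType.

Lemma orthogonal_gram n p (H : 'M[R]_n) (X : 'M[R]_(n, p)) : H^T *m H = 1%:M ->
  (H *m X)^T *m (H *m X) = X^T *m X.
Proof.
by move=> H_orth; rewrite trmx_mul mulmxA -[_ *m H^T *m H]mulmxA H_orth mulmx1.
Qed.

(* The Householder reflection [1 - 2 w w^T / |w|^2] with [w = e - v]. *)
Lemma orthogonal_map_unit n (e v : 'cV[R]_n) :
  e^T *m e = 1%:M -> v^T *m v = 1%:M ->
  exists H : 'M[R]_n, H^T *m H = 1%:M /\ H *m e = v.
Proof.
move=> e_unit v_unit; have [<-|e_neq_v] := eqVneq e v.
  by exists 1%:M; rewrite trmx1 !mul1mx.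
pose w := e - v; have wE : w = e - v by [].
clearbody w.
pose s := (w^T *m w) 0 0.
have s_gt0 : 0 < s.
  by rewrite /s -[w in _ *m w]trmxK row_sqnorm_gt0 // trmx_eq0 wE subr_eq0.
pose t := (v^T *m e) 0 0.
have vte : v^T *m e = t%:M by rewrite {1}[v^T *m e]mx11_scalar.
have etv : e^T *m v = t%:M by rewrite -[e^T *m v]trmx11 trmx_mul trmxK vte.
have wte : w^T *m e = (1 - t)%:M.
  by rewrite wE [(_ - _)^T]linearB mulmxBl e_unit vte raddfB.
have wtw : w^T *m w = s%:M by rewrite {1}[w^T *m w]mx11_scalar.
have sE : s = 2 - 2 * t.
  have := congr1 (fun M : 'M[R]_1 => M 0 0) wtw.
  rewrite wE [(_ - _)^T]linearB mulmxBl !mulmxBr e_unit v_unit vte etv.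
  by rewrite !mxE /= !mulr1n => <-; ring.
pose c := 2 / s; have cs : c * s = 2 by rewrite /c mulfVK ?gt_eqF.
exists (1%:M - c *: (w *m w^T)); split.
  have W2 : (w *m w^T) *m (w *m w^T) = s *: (w *m w^T).
    by rewrite mulmxA -[w *m w^T *m w]mulmxA wtw mul_mx_scalar -scalemxAl.
  rewrite [(_ - _)^T]linearB /= [(_ *: _)^T]linearZ /= trmx1 trmx_mul trmxK.
  move: (w *m w^T) W2 => W W2.
  rewrite mulmxBr mulmx1 mulmxBl mul1mx -scalemxAl -scalemxAr W2 !scalerA.
  have -> : c * c * s = c + c by rewrite -mulrA cs; ring.
  by rewrite scalerDl opprB addrK subrK.
rewrite mulmxBl mul1mx -scalemxAl -mulmxA wte mul_mx_scalar scalerA.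
have -> : c * (1 - t) = 1 by rewrite /c sE; field; rewrite -sE gt_eqF.
by rewrite scale1r wE opprB addrC subrK.
Qed.

Definition e0 n : 'cV[R]_(1 + n) := col_mx 1%:M 0.

Lemma e0_unit n : (e0 n)^T *m e0 n = 1%:M.
Proof.
by rewrite /e0 tr_col_mx trmx1 trmx0 mul_row_col mulmx1 mul0mx addr0.
Qed.

Lemma block_mx_first_col_row m n (B : 'M[R]_(1 + m, 1 + n)) (s : R) :
  B *m e0 n = col_mx s%:M 0 -> (e0 m)^T *m B = row_mx s%:M 0 ->
  B = block_mx s%:M 0 0 (drsubmx B).
Proof.
rewrite /e0 tr_col_mx trmx1 trmx0 -[B]submxK mul_block_col mul_row_block.
rewrite !mulmx1 !mulmx0 !mul1mx !mul0mx !addr0 block_mxKdr.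
by move=> /eq_col_mx [-> ->] /eq_row_mx [_ ->].
Qed.

(* Deflation: an eigenvector with eigenvalue [0] splits off a symmetric
   block of smaller size. *)
Lemma symmetric_eigenvector_neq0 n (B : 'M[R]_n) : B^T = B -> B != 0 ->
  exists (v : 'cV[R]_n) (e : R), [/\ v^T *m v = 1%:M, B *m v = e *: v & e != 0].
Proof.
elim: n B => [|n IHn] B B_sym B_neq0.
  by move: B_neq0; rewrite (flatmx0 B) eqxx.
have [v [e [v_unit Bv]]] := symmetric_eigenvector B_sym.
have [e_eq0|] := eqVneq e 0; last by exists v, e.
have [H [H_orth He0]] := orthogonal_map_unit (e0_unit n) v_unit.
have H_orth' := mulmx1C H_orth.
pose C : 'M[R]_(1 + n) := H^T *m B *m H.
have C_sym : C^T = C by rewrite /C !trmx_mul trmxK B_sym mulmxA.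
have Ce0 : C *m e0 n = col_mx 0%:M 0.
  by rewrite /C -!mulmxA He0 Bv e_eq0 scale0r mulmx0 raddf0 col_mx0.
have e0C : (e0 n)^T *m C = row_mx 0%:M 0.
  by rewrite -C_sym -trmx_mul Ce0 tr_col_mx !trmx0 tr_scalar_mx.
have CE := block_mx_first_col_row Ce0 e0C; set d := drsubmx C in CE.
have BH : B *m H = H *m C by rewrite /C !mulmxA H_orth' mul1mx.
have d_sym : d^T = d.
  by move: C_sym; rewrite CE tr_block_mx => /eq_block_mx [_ _ _ ->].
have d_neq0 : d != 0.
  apply: contraNneq B_neq0 => d0.
  rewrite -[B]mulmx1 -H_orth' mulmxA BH CE d0 raddf0 block_mx0.
  by rewrite mulmx0 !mul0mx.
have [v' [e' [v'_unit dv' e'_neq0]]] := IHn d d_sym d_neq0.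
pose x : 'cV[R]_(1 + n) := col_mx 0 v'.
have x_unit : x^T *m x = 1%:M.
  by rewrite tr_col_mx trmx0 mul_row_col mul0mx add0r.
exists (H *m x), e'; split; rewrite ?orthogonal_gram //.
rewrite mulmxA BH -mulmxA CE mul_block_col raddf0 !mul0mx !add0r dv'.
by rewrite scalemxAr scale_col_mx scaler0.
Qed.

Lemma is_svd0 m n : is_svd (0 : 'M[R]_(m, n)) 1%:M 0 1%:M.
Proof. by split; rewrite ?trmx1 ?mulmx1 ?mulmx0 // => i j; rewrite mxE. Qed.

Lemma is_svd_orthogonal_mul m n (A : 'M[R]_(m, n)) U D V G H :
  is_svd A U D V -> G^T *m G = 1%:M -> H^T *m H = 1%:M ->
  is_svd (G *m A *m H^T) (G *m U) D (H *m V).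
Proof.
case=> U_orth V_orth D_diag D_ge0 -> G_orth H_orth.
split; rewrite ?orthogonal_gram //.
by rewrite trmx_mul !mulmxA.
Qed.

Lemma orthogonal_block1 n (Q : 'M[R]_n) : Q^T *m Q = 1%:M ->
  (block_mx (1%:M : 'M_1) 0 0 Q)^T *m block_mx (1%:M : 'M_1) 0 0 Q = 1%:M.
Proof.
move=> Q_orth; rewrite tr_block_mx trmx1 !trmx0 mulmx_block Q_orth.
by rewrite !mulmx0 !mul0mx !addr0 !add0r mulmx1 -scalar_mx_block.
Qed.

Lemma is_svd_block m n (s : R) (A : 'M[R]_(m, n)) U D V : 0 <= s ->
  is_svd A U D V ->
  is_svd (block_mx (s%:M : 'M_1) 0 0 A) (block_mx (1%:M : 'M_1) 0 0 U)
    (block_mx (s%:M : 'M_1) 0 0 D) (block_mx (1%:M : 'M_1) 0 0 V).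
Proof.
move=> s_ge0 [U_orth V_orth D_diag D_ge0 ->]; split.
- exact: orthogonal_block1.
- exact: orthogonal_block1.
- move=> i j; rewrite !mxE.
  case: (splitP i) => i' ->; rewrite ?mxE;
    case: (splitP j) => j' ->; rewrite ?mxE //=.
    by rewrite !ord1 eqxx.
  by rewrite eqSS => /D_diag.
- move=> i j; rewrite !mxE.
  case: (splitP i) => i' _; rewrite ?mxE;
    case: (splitP j) => j' _; rewrite ?mxE //.
  exact: mulrn_wge0.
- rewrite tr_block_mx trmx1 !trmx0 !mulmx_block !mulmx0 !mul0mx !addr0 !add0r.
  by rewrite !mulmx1 mul1mx !mul0mx.
Qed.

(* With [A^T A v = e v] for a unit [v] and [e != 0], [u = A v / sqrt e] is a
   unit vector with [u^T A = sqrt e v^T]; reflections sending the first basis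
   vector to [u] and [v] split off the singular value [sqrt e]. *)
Lemma split_singular_value m n (A : 'M[R]_(1 + m, 1 + n)) : A != 0 ->
  exists (G : 'M[R]_(1 + m)) (H : 'M[R]_(1 + n)) (s : R),
  [/\ G^T *m G = 1%:M, H^T *m H = 1%:M, 0 <= s &
    G^T *m A *m H = block_mx (s%:M : 'M_1) 0 0 (drsubmx (G^T *m A *m H))].
Proof.
move=> A_neq0.
have AtA_sym : (A^T *m A)^T = A^T *m A by rewrite trmx_mul trmxK.
have AtA_neq0 : A^T *m A != 0 by apply: contra_neq A_neq0 => /trmx_mulmx_eq0.
have [v [e [v_unit AtAv e_neq0]]] :=
  symmetric_eigenvector_neq0 AtA_sym AtA_neq0.
pose w := A *m v.
have wtw : w^T *m w = e%:M.
  by rewrite trmx_mul -mulmxA (mulmxA A^T) AtAv -scalemxAr v_unit scalemx1.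
have e_gt0 : 0 < e.
  rewrite lt_def e_neq0 /=.
  by have := row_sqnorm_ge0 w^T; rewrite trmxK wtw mxE eqxx mulr1n.
pose s := Num.sqrt e; have s_gt0 : 0 < s by rewrite sqrtr_gt0.
pose u := s^-1 *: w.
have u_unit : u^T *m u = 1%:M.
  rewrite [(_ *: _)^T]linearZ /= -scalemxAl -scalemxAr scalerA wtw.
  by rewrite scale_scalar_mx -invfM -expr2 sqr_sqrtr ?ltW // mulVf ?gt_eqF.
have [G [G_orth Ge0]] := orthogonal_map_unit (e0_unit m) u_unit.
have [H [H_orth He0]] := orthogonal_map_unit (e0_unit n) v_unit.
exists G, H, s; split => //; first exact: ltW.
apply: block_mx_first_col_row.
  rewrite -!mulmxA He0 -/w.
  have -> : w = s *: u by rewrite /u scalerA mulfV ?gt_eqF // scale1r.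
  rewrite -scalemxAr -Ge0 mulmxA G_orth mul1mx /e0.
  by rewrite scale_col_mx scalemx1 scaler0.
have utA : u^T *m A = s *: v^T.
  rewrite -[u^T *m A]trmxK trmx_mul trmxK /u -scalemxAr /w mulmxA AtAv scalerA.
  rewrite [(_ *: _)^T]linearZ /=; congr (_ *: _).
  by rewrite /s -{2}(sqr_sqrtr (ltW e_gt0)) expr2 mulKf ?gt_eqF.
rewrite !mulmxA -trmx_mul Ge0 utA -scalemxAl -He0 trmx_mul -mulmxA H_orth.
by rewrite mulmx1 /e0 tr_col_mx trmx1 trmx0 scale_row_mx scalemx1 scaler0.
Qed.

Lemma svd_exists m n (A : 'M[R]_(m, n)) : exists U D V, is_svd A U D V.
Proof.
elim: n m A => [|n IHn] m A.
  by rewrite (thinmx0 A); exists 1%:M, 0, 1%:M; apply: is_svd0.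
case: m A => [|m] A.
  by rewrite (flatmx0 A); exists 1%:M, 0, 1%:M; apply: is_svd0.
have [->|A_neq0] := eqVneq A 0; first by exists 1%:M, 0, 1%:M; apply: is_svd0.
have [G [H [s [G_orth H_orth s_ge0 AE]]]] := split_singular_value A_neq0.
have [U [D [V svdA']]] := IHn m (drsubmx (G^T *m A *m H)).
have := is_svd_orthogonal_mul (is_svd_block s_ge0 svdA') G_orth H_orth.
rewrite -AE !mulmxA (mulmx1C G_orth) mul1mx -mulmxA (mulmx1C H_orth) mulmx1.
move=> svdA.
by do 3!eexists; exact: svdA.
Qed.

End SingularValueDecomposition.

Section MatrixInnerProduct.
Variables (R : realType) (m n : nat).
Implicit Types (G X Y Z D W : 'M[R]_(m, n)) (a t : R).

Definition mxdot X Y : R := \sum_i \sum_j X i j * Y i j.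

Lemma mxdotC X Y : mxdot X Y = mxdot Y X.
Proof. by apply: eq_bigr => i _; apply: eq_bigr => j _; rewrite mulrC. Qed.

Lemma mxdotDl X Y Z : mxdot (X + Y) Z = mxdot X Z + mxdot Y Z.
Proof.
rewrite /mxdot -big_split; apply: eq_bigr => i _; rewrite -big_split.
by apply: eq_bigr => j _; rewrite mxE mulrDl.
Qed.

Lemma mxdotZl a X Y : mxdot (a *: X) Y = a * mxdot X Y.
Proof.
rewrite /mxdot mulr_sumr; apply: eq_bigr => i _; rewrite mulr_sumr.
by apply: eq_bigr => j _; rewrite mxE mulrA.
Qed.

Lemma mxdotNl X Y : mxdot (- X) Y = - mxdot X Y.
Proof. by rewrite -scaleN1r mxdotZl mulN1r. Qed.

Lemma mxdotBl X Y Z : mxdot (X - Y) Z = mxdot X Z - mxdot Y Z.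
Proof. by rewrite mxdotDl mxdotNl. Qed.

Lemma mxdotDr X Y Z : mxdot X (Y + Z) = mxdot X Y + mxdot X Z.
Proof. by rewrite mxdotC mxdotDl !(mxdotC X). Qed.

Lemma mxdotZr a X Y : mxdot X (a *: Y) = a * mxdot X Y.
Proof. by rewrite mxdotC mxdotZl mxdotC. Qed.

Lemma mxdotNr X Y : mxdot X (- Y) = - mxdot X Y.
Proof. by rewrite mxdotC mxdotNl mxdotC. Qed.

Lemma mxdotBr X Y Z : mxdot X (Y - Z) = mxdot X Y - mxdot X Z.
Proof. by rewrite mxdotC mxdotBl !(mxdotC X). Qed.

Definition mxdotE :=
  (mxdotDl, mxdotBl, mxdotNl, mxdotZl, mxdotDr, mxdotBr, mxdotNr, mxdotZr).

Lemma mxdot_trace X Y : mxdot X Y = \tr (X^T *m Y).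
Proof.
rewrite /mxdot /mxtrace exchange_big; apply: eq_bigr => j _; rewrite mxE.
by apply: eq_bigr => i _; rewrite mxE.
Qed.

Lemma mxdot_delta X i j : mxdot X (delta_mx i j) = X i j.
Proof.
rewrite /mxdot (bigD1 i) //= (bigD1 j) //= big1 => [|j' j'_neq]; last first.
  by rewrite mxE eqxx (negbTE j'_neq) mulr0.
rewrite big1 => [|i' i'_neq]; last first.
  by apply: big1 => j' _; rewrite mxE (negbTE i'_neq) mulr0.
by rewrite mxE !eqxx mulr1 !addr0.
Qed.

Lemma mxdot_ge0 X : 0 <= mxdot X X.
Proof.
by apply: sumr_ge0 => i _; apply: sumr_ge0 => j _; rewrite -expr2 sqr_ge0.
Qed.

Lemma frob_sqr X : frob X ^+ 2 = mxdot X X.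
Proof.
rewrite sqr_sqrtr; last first.
  by apply: sumr_ge0 => i _; apply: sumr_ge0 => j _; apply: sqr_ge0.
by apply: eq_bigr => i _; apply: eq_bigr => j _; rewrite expr2.
Qed.

Lemma frob_ge0 X : 0 <= frob X.
Proof. exact: sqrtr_ge0. Qed.

Lemma frob_sqr_shift X D W t :
  frob (X + t *: D - W) ^+ 2
  = frob (X - W) ^+ 2 + 2 * t * mxdot (X - W) D + t ^+ 2 * frob D ^+ 2.
Proof.
rewrite !frob_sqr !mxdotE [mxdot D X]mxdotC [mxdot W X]mxdotC [mxdot D W]mxdotC.
ring.
Qed.

Lemma frob_sqrB_le X Y : frob X ^+ 2 - frob Y ^+ 2 <= 2 * mxdot (X - Y) X.
Proof.
have := mxdot_ge0 (X - Y); rewrite !frob_sqr !mxdotE [mxdot Y X]mxdotC; lra.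
Qed.

Lemma mxdotB_le_frob_sqr X Y : 4 * mxdot (X - Y) Y <= frob X ^+ 2.
Proof.
have := mxdot_ge0 (X - 2%:R *: Y).
by rewrite frob_sqr !mxdotE [mxdot Y X]mxdotC; lra.
Qed.

Lemma l1norm_ge0 X : 0 <= l1norm X.
Proof. by apply: sumr_ge0 => i _; apply: sumr_ge0 => j _. Qed.

Lemma l1normD X Y : l1norm (X + Y) <= l1norm X + l1norm Y.
Proof.
rewrite /l1norm -big_split; apply: ler_sum => i _; rewrite -big_split.
by apply: ler_sum => j _; rewrite mxE ler_normD.
Qed.

Lemma l1normZ a X : l1norm (a *: X) = `|a| * l1norm X.
Proof.
rewrite /l1norm mulr_sumr; apply: eq_bigr => i _; rewrite mulr_sumr.
by apply: eq_bigr => j _; rewrite mxE normrM.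
Qed.

Lemma l1normB X Y : l1norm (X - Y) <= l1norm X + l1norm Y.
Proof. by rewrite -[l1norm Y]mul1r -normrN1 -l1normZ scaleN1r l1normD. Qed.

Lemma l1norm_delta i j : l1norm (delta_mx i j : 'M[R]_(m, n)) = 1.
Proof.
have := mxdot_delta (const_mx 1) i j; rewrite mxE => <-; apply: eq_bigr => i' _.
by apply: eq_bigr => j' _; rewrite !mxE mul1r ger0_norm ?ler0n.
Qed.

Lemma frob_sqr_delta i j : frob (delta_mx i j : 'M[R]_(m, n)) ^+ 2 = 1.
Proof. by rewrite frob_sqr mxdot_delta mxE !eqxx. Qed.

Lemma mxdot_le_l1norm G X :
  (forall i j, `|G i j| <= 1) -> mxdot G X <= l1norm X.
Proof.
move=> G_le1; apply: ler_sum => i _; apply: ler_sum => j _.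
by rewrite (le_trans (ler_norm _)) // normrM ler_piMl.
Qed.

Lemma ler_sum2_entry (F : 'I_m -> 'I_n -> R) i j : (forall i j, 0 <= F i j) ->
  F i j <= \sum_i' \sum_j' F i' j'.
Proof.
move=> F_ge0; rewrite (bigD1 i) //= (bigD1 j) //= -addrA lerDl.
by rewrite addr_ge0 ?sumr_ge0 // => *; rewrite ?sumr_ge0.
Qed.

Lemma entry_le_frob X i j : `|X i j| <= frob X.
Proof.
rewrite -sqrtr_sqr ler_wsqrtr //.
by apply: (ler_sum2_entry (F := fun i j => X i j ^+ 2)) => *; apply: sqr_ge0.
Qed.

Lemma l1norm_le_entrywise X c :
  (forall i j, `|X i j| <= c) -> l1norm X <= (m * n)%:R * c.
Proof.
move=> X_le; apply: (@le_trans _ _ (\sum_(i < m) \sum_(j < n) c)).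
  by apply: ler_sum => i _; apply: ler_sum => j _.
by rewrite !sumr_const !card_ord -mulrnA mulr_natl mulnC.
Qed.

Lemma frob_le_l1norm X : frob X <= l1norm X.
Proof.
rewrite -[l1norm X]ger0_norm ?l1norm_ge0 // -sqrtr_sqr ler_wsqrtr //.
rewrite expr2 {1}/l1norm mulr_suml; apply: ler_sum => i _.
rewrite mulr_suml; apply: ler_sum => j _.
rewrite -real_normK ?num_real // expr2 ler_wpM2l //.
exact: (ler_sum2_entry (F := fun i j => `|X i j|)).
Qed.

Lemma frob_sqrZ a X : frob (a *: X) ^+ 2 = a ^+ 2 * frob X ^+ 2.
Proof. by rewrite !frob_sqr mxdotZl mxdotZr mulrA expr2. Qed.

End MatrixInnerProduct.

Section NuclearNorm.
Variables (R : realType) (m n : nat).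
Implicit Types (Q X Y : 'M[R]_(m, n)).

Definition contraction Q := forall (x : 'cV[R]_m) (y : 'cV[R]_n),
  2 * (x^T *m Q *m y) 0 0 <= (x^T *m x) 0 0 + (y^T *m y) 0 0.

Lemma contraction0 : contraction 0.
Proof.
move=> x y; rewrite mulmx0 mul0mx mxE mulr0.
by apply: addr_ge0; [have := row_sqnorm_ge0 x^T | have := row_sqnorm_ge0 y^T];
  rewrite trmxK.
Qed.

Lemma contraction_orthogonal_mul Q (U : 'M[R]_m) (V : 'M[R]_n) :
  contraction Q -> U^T *m U = 1%:M -> V^T *m V = 1%:M ->
  contraction (U *m Q *m V^T).
Proof.
move=> Q_contr /mulmx1C U_orth /mulmx1C V_orth x y.
have := Q_contr (U^T *m x) (V^T *m y).
by rewrite !orthogonal_gram ?trmxK // !trmx_mul !trmxK !mulmxA.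
Qed.

Lemma delta_bilinear p q (M : 'M[R]_(p, q)) i j :
  ((delta_mx i 0 : 'cV[R]_p)^T *m M *m (delta_mx j 0 : 'cV[R]_q)) 0 0 = M i j.
Proof. by rewrite trmx_delta -rowE -colE !mxE. Qed.

Lemma contraction_orthogonal_entry Q (U : 'M[R]_m) (V : 'M[R]_n) i j :
  contraction Q -> U^T *m U = 1%:M -> V^T *m V = 1%:M ->
  (U^T *m Q *m V) i j <= 1.
Proof.
move=> Q_contr U_orth V_orth.
pose ei : 'cV[R]_m := delta_mx i 0; pose ej : 'cV[R]_n := delta_mx j 0.
have := Q_contr (U *m ei) (V *m ej).
have -> : ((U *m ei)^T *m Q *m (V *m ej)) 0 0 = (U^T *m Q *m V) i j.
  by rewrite -(delta_bilinear (U^T *m Q *m V)) trmx_mul !mulmxA.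
(* [set] keeps [mxE] below from unfolding the entry of the product. *)
set P := U^T *m Q *m V.
rewrite !orthogonal_gram // -[ei^T]mulmx1 -[ej^T]mulmx1 !delta_bilinear.
by rewrite !mxE !eqxx /=; lra.
Qed.

Lemma contraction_entry Q i j : contraction Q -> `|Q i j| <= 1.
Proof.
move=> Q_contr; have id_orth p : (1%:M : 'M[R]_p)^T *m 1%:M = 1%:M.
  by rewrite trmx1 mulmx1.
have Nid_orth p : (- 1%:M : 'M[R]_p)^T *m - 1%:M = 1%:M.
  by rewrite [(- _)^T]linearN /= trmx1 mulNmx mulmxN opprK mulmx1.
have := contraction_orthogonal_entry i j Q_contr (id_orth m) (id_orth n).
have := contraction_orthogonal_entry i j Q_contr (Nid_orth m) (id_orth n).
rewrite [(- _)^T]linearN /= trmx1 mulNmx !mul1mx !mulmx1 mxE ler_norml; lra.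
Qed.

Lemma col_sqnormE p (x : 'cV[R]_p) : (x^T *m x) 0 0 = \sum_i x i 0 ^+ 2.
Proof. by rewrite mxE; apply: eq_bigr => i _; rewrite mxE expr2. Qed.

Lemma contraction_schur Q : (forall i j, 0 <= Q i j) ->
  (forall i, \sum_j Q i j <= 1) -> (forall j, \sum_i Q i j <= 1) ->
  contraction Q.
Proof.
move=> Q_ge0 row_le1 col_le1 x y; rewrite !col_sqnormE.
have -> : (x^T *m Q *m y) 0 0 = \sum_i \sum_j Q i j * (x i 0 * y j 0).
  rewrite mxE; under eq_bigr do rewrite mxE mulr_suml.
  rewrite exchange_big; apply: eq_bigr => i _; apply: eq_bigr => j _.
  by rewrite mxE; ring.
apply: (@le_trans _ _
  (\sum_i \sum_j (Q i j * x i 0 ^+ 2 + Q i j * y j 0 ^+ 2))).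
  rewrite mulr_sumr; apply: ler_sum => i _; rewrite mulr_sumr.
  apply: ler_sum => j _; rewrite mulrCA -mulrDr ler_wpM2l //.
  by have := sqr_ge0 (x i 0 - y j 0); rewrite sqrrB; lra.
under eq_bigr do rewrite big_split /=.
rewrite big_split /= lerD //.
  by apply: ler_sum => i _; rewrite -mulr_suml ler_piMl ?sqr_ge0.
rewrite exchange_big; apply: ler_sum => j _.
by rewrite -mulr_suml ler_piMl ?sqr_ge0.
Qed.

Lemma sum_indicator_le1 p (k : nat) : \sum_(j < p) (k == j)%:R <= 1 :> R.
Proof.
have [k_lt|k_ge] := ltnP k p; last first.
  by rewrite big1 ?ler01 // => j _; rewrite gtn_eqF // (leq_trans (ltn_ord j)).
rewrite (bigD1 (Ordinal k_lt)) //= eqxx big1 ?addr0 // => j j_neq.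
suff -> : (k == j) = false by [].
by apply: contraNF j_neq => /eqP k_eq; apply/eqP/val_inj; rewrite /= k_eq.
Qed.

Lemma contraction_pid : contraction (pid_mx m : 'M[R]_(m, n)).
Proof.
apply: contraction_schur => [i j|i|j]; rewrite ?mxE ?ler0n //.
  by under eq_bigr do rewrite mxE ltn_ord andbT; apply: sum_indicator_le1.
by under eq_bigr do rewrite mxE ltn_ord andbT eq_sym; apply: sum_indicator_le1.
Qed.

Lemma svd_diagP X : exists U V, is_svd X U (svd_diag X) V.
Proof.
have [U [D [V svdX]]] := svd_exists X.
apply: (xgetPex 0 (P := [set D | exists U V, is_svd X U D V])).
by exists D, U, V.
Qed.

Lemma mxdot_svd Q (U : 'M[R]_m) D (V : 'M[R]_n) :
  mxdot Q (U *m D *m V^T) = mxdot (U^T *m Q *m V) D.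
Proof.
by rewrite !mxdot_trace !mulmxA mxtrace_mulC !trmx_mul trmxK !mulmxA.
Qed.

Lemma mxdot_le_nucnorm Q X : contraction Q -> mxdot Q X <= nucnorm X.
Proof.
move=> Q_contr; have [U [V [U_orth V_orth _ D_ge0 XE]]] := svd_diagP X.
rewrite {1}XE mxdot_svd; apply: ler_sum => i _; apply: ler_sum => j _.
by rewrite ler_piMl ?contraction_orthogonal_entry.
Qed.

Lemma nucnorm_attained X : exists2 Q, contraction Q & mxdot Q X = nucnorm X.
Proof.
have [U [V [U_orth V_orth D_diag _ XE]]] := svd_diagP X.
exists (U *m pid_mx m *m V^T).
  exact: contraction_orthogonal_mul contraction_pid U_orth V_orth.
rewrite {1}XE mxdot_svd !mulmxA U_orth mul1mx -mulmxA V_orth mulmx1.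
apply: eq_bigr => i _; apply: eq_bigr => j _; rewrite mxE ltn_ord andbT.
by case: eqP => [_|/eqP ij_neq]; rewrite ?mul1r // D_diag ?mulr0.
Qed.

Lemma nucnorm_ge0 X : 0 <= nucnorm X.
Proof.
apply: le_trans (mxdot_le_nucnorm X contraction0).
by rewrite /mxdot big1 // => i _; rewrite big1 // => j _; rewrite mxE mul0r.
Qed.

Lemma nucnormD_l1norm X Y : nucnorm (X + Y) <= nucnorm X + l1norm Y.
Proof.
have [Q Q_contr <-] := nucnorm_attained (X + Y).
rewrite mxdotDr lerD ?mxdot_le_nucnorm ?mxdot_le_l1norm // => i j.
exact: contraction_entry.
Qed.

Lemma nucnormZ_le a X : 0 <= a -> nucnorm (a *: X) <= a * nucnorm X.
Proof.
move=> a_ge0; have [Q Q_contr <-] := nucnorm_attained (a *: X).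
by rewrite mxdotZr ler_wpM2l ?mxdot_le_nucnorm.
Qed.

End NuclearNorm.

Section ProxOptimality.
Variables (R : realType) (m n : nat).

Lemma ge0_linear_coef (a b : R) :
  (forall t, 0 < t -> t <= 1 -> 0 <= a * t + b * t ^+ 2) -> 0 <= a.
Proof.
move=> small_t; rewrite leNgt; apply/negP => a_lt0.
pose c := `|b| - a; have c_gt0 : 0 < c by rewrite /c; have := normr_ge0 b; lra.
pose t := - a / (2 * c).
have ct : c * t = - a / 2 by rewrite /t; field; rewrite gt_eqF.
have t_gt0 : 0 < t by rewrite /t divr_gt0 //; lra.
have t_le1 : t <= 1.
  by rewrite /t ler_pdivrMr ?mulr_gt0 // mul1r /c; have := normr_ge0 b; lra.
have bt : b * t ^+ 2 <= c * t * t.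
  rewrite -mulrA -expr2 ler_wpM2r ?sqr_ge0 // /c.
  have := ler_norm b; have := normr_ge0 b; lra.
have := small_t t t_gt0 t_le1; rewrite ct in bt; nra.
Qed.

Variables (phi : 'M[R]_(m, n) -> R) (c : R).
Hypothesis phiD_l1norm : forall X D, phi (X + D) <= phi X + c * l1norm D.
Hypothesis phiZ_le : forall X t, 0 <= t -> phi (t *: X) <= t * phi X.

(* [G] plays the role of the negative gradient of the smooth part at the
   minimiser [X]; the conclusion says [G] is a subgradient of [phi] at [X]. *)
Lemma prox_optimality (X G : 'M[R]_(m, n)) (a : R) :
  (forall D t, 0 <= phi (X + t *: D) - phi X - t * mxdot G D
                   + a * t ^+ 2 * frob D ^+ 2) ->
  (forall i j, `|G i j| <= c) /\ phi X <= mxdot G X.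
Proof.
move=> first_order.
have G_le s i j : `|s| = 1 -> s * G i j <= c.
  move=> s_norm; rewrite -subr_ge0.
  apply: (ge0_linear_coef (b := a)) => t t_gt0 _.
  have := first_order (s *: delta_mx i j) t.
  have := phiD_l1norm X (t *: (s *: delta_mx i j)).
  rewrite !l1normZ l1norm_delta s_norm gtr0_norm // mxdotZr mxdot_delta.
  rewrite frob_sqrZ frob_sqr_delta -(real_normK (num_real s)) s_norm expr1n.
  nra.
split=> [i j|].
  have := G_le 1 i j; have := G_le (-1) i j.
  by rewrite normrN normr1 ler_norml; lra.
rewrite -subr_ge0.
apply: (ge0_linear_coef (b := a * frob X ^+ 2)) => t t_gt0 t_le1.
have t_le1' : 0 <= 1 - t by lra.
have := first_order (- X) t; have := phiZ_le X t_le1'.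
have -> : X + t *: - X = (1 - t) *: X by rewrite scalerN scalerBl scale1r.
rewrite mxdotNr -scaleN1r frob_sqrZ sqrrN expr1n mul1r; lra.
Qed.

End ProxOptimality.

Section ProxOptimalityInstances.
Variables (R : realType) (m n : nat).
Implicit Types (S L W V B Y G : 'M[R]_(m, n)).

Lemma l1norm_prox_optimality (lam mu : R) S W Y :
  0 < lam -> 0 < mu -> Y = mu *: (W - S) ->
  (forall S', lam * l1norm S + mu / 2 * frob (S - W) ^+ 2
              <= lam * l1norm S' + mu / 2 * frob (S' - W) ^+ 2) ->
  (forall i j, `|Y i j| <= lam) /\ lam * l1norm S <= mxdot Y S.
Proof.
move=> lam_gt0 mu_gt0 Y_def S_min.
have l1D (X D : 'M[R]_(m, n)) :
    lam * l1norm (X + D) <= lam * l1norm X + lam * l1norm D.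
  by rewrite -mulrDr; apply: ler_wpM2l; [exact: ltW | exact: l1normD].
have l1Z (X : 'M[R]_(m, n)) t :
    0 <= t -> lam * l1norm (t *: X) <= t * (lam * l1norm X).
  by move=> t_ge0; rewrite l1normZ ger0_norm // mulrCA.
apply: (@prox_optimality _ _ _ (fun X => lam * l1norm X) _ l1D l1Z _ _
  (mu / 2)).
move=> D t /=; have := S_min (S + t *: D).
by rewrite frob_sqr_shift Y_def !mxdotE; lra.
Qed.

Lemma nucnorm_prox_optimality (gam mu : R) L V B G :
  0 <= gam -> 0 < mu -> G = mu *: (V - L) - (2 * gam) *: (L - B) ->
  (forall L', nucnorm L + gam * frob (L - B) ^+ 2 + mu / 2 * frob (L - V) ^+ 2
     <= nucnorm L' + gam * frob (L' - B) ^+ 2 + mu / 2 * frob (L' - V) ^+ 2) ->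
  (forall i j, `|G i j| <= 1) /\ 0 <= mxdot G L.
Proof.
move=> gam_ge0 mu_gt0 G_def L_min.
have nucD (X D : 'M[R]_(m, n)) : nucnorm (X + D) <= nucnorm X + 1 * l1norm D.
  by rewrite mul1r nucnormD_l1norm.
have nucZ (X : 'M[R]_(m, n)) t : 0 <= t -> nucnorm (t *: X) <= t * nucnorm X.
  exact: nucnormZ_le.
have [G_le1 nucL_le] : (forall i j, `|G i j| <= 1) /\ nucnorm L <= mxdot G L.
  apply: (@prox_optimality _ _ _ (@nucnorm R m n) _ nucD nucZ _ _
    (gam + mu / 2)).
  move=> D t; have := L_min (L + t *: D).
  by rewrite !frob_sqr_shift G_def !mxdotE; lra.
by split=> //; apply: le_trans nucL_le; apply: nucnorm_ge0.
Qed.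

End ProxOptimalityInstances.

Section AdmmBound.
Variables (R : realType) (m n : nat).

Lemma bounded_of_descent (x y : nat -> R) (B : R) :
  (forall k, x k <= y k) -> x 0%N <= B ->
  (forall k, B <= y k.+1 -> x k.+1 <= x k) -> forall k, x k <= B.
Proof.
move=> x_le_y x0_le descent; elim=> [//|k IHk].
have [/descent/le_trans -> //|y_lt] := leP B (y k.+1).
exact: le_trans (x_le_y _) (ltW y_lt).
Qed.

(* Expand [2 <mu (S' - S), S'>]: [<G, S'> = <G, H - D> - <G, L'>] is at most
   [l1norm (H - D)], and [4 <c - S', S'> <= |c|^2] for [c = H - D - B]. *)
Lemma admm_sqr_step (mu gam : R) (H B S S' L' Y' G D : 'M[R]_(m, n)) :
  0 <= mu -> 0 <= gam -> (forall i j, `|G i j| <= 1) -> 0 <= mxdot G L' ->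
  L' = H - S' - D -> mu *: (S' - S) = G - Y' + (2 * gam) *: (L' - B) ->
  mu * (frob S' ^+ 2 - frob S ^+ 2)
  <= 2 * (l1norm (H - D) + gam / 2 * frob (H - D - B) ^+ 2 - mxdot Y' S').
Proof.
move=> mu_ge0 gam_ge0 G_le1 GL'_ge0 L'E stepE.
have S'E : S' = H - D - L'.
  by rewrite L'E; apply/matrixP => i j; rewrite !mxE; ring.
have L'BE : L' - B = H - D - B - S'.
  by rewrite L'E; apply/matrixP => i j; rewrite !mxE; ring.
have GS' : mxdot G S' <= l1norm (H - D).
  rewrite [in mxdot _ S']S'E mxdotBr lerBDr.
  by rewrite (le_trans (mxdot_le_l1norm _ G_le1)) ?lerDl.
have quad : gam * (4 * mxdot (L' - B) S') <= gam * frob (H - D - B) ^+ 2.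
  by rewrite L'BE ler_wpM2l ?mxdotB_le_frob_sqr.
have := ler_wpM2l mu_ge0 (frob_sqrB_le S' S).
rewrite mulrCA -mxdotZl stepE !mxdotDl mxdotNl mxdotZl; lra.
Qed.

End AdmmBound.

Lemma clamped_growth_ge (R : realType) (mu : nat -> R) (mu0 rho mumax : R) :
  0 <= mu0 -> 1 <= rho -> mu0 <= mumax -> mu 0%N = mu0 ->
  (forall k, mu k.+1 = Num.min (rho * mu k) mumax) -> forall k, mu0 <= mu k.
Proof.
move=> mu0_ge0 rho_ge1 mu0_le mu_0 mu_S; elim=> [|k IHk]; first by rewrite mu_0.
rewrite mu_S le_min mu0_le andbT (le_trans IHk) // ler_peMl //.
exact: le_trans IHk.
Qed.

Section AdmmIterates.
Variables (R : realType) (Ns Nb : nat) (Hu L1 : 'M[R]_(Ns, Nb)).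
Variables (lambda gamma beta mu0 : R) (mu : nat -> R).
Variables (L S Y : nat -> 'M[R]_(Ns, Nb)).
Hypotheses (Hlambda : 0 < lambda) (Hgamma : 0 <= gamma) (Hmu0 : 0 < mu0).
Hypotheses (mu_ge : forall k, mu0 <= mu k) (HS0 : S 0%N = 0) (HY0 : Y 0%N = 0).
Hypothesis HL : forall k (L' : 'M[R]_(Ns, Nb)),
  nucnorm (L k.+1) + gamma * frob (L k.+1 - beta *: L1) ^+ 2
    + mu k / 2 * frob (L k.+1 - (Hu - S k + (mu k)^-1 *: Y k)) ^+ 2
  <= nucnorm L' + gamma * frob (L' - beta *: L1) ^+ 2
    + mu k / 2 * frob (L' - (Hu - S k + (mu k)^-1 *: Y k)) ^+ 2.
Hypothesis HS : forall k (S' : 'M[R]_(Ns, Nb)),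
  lambda * l1norm (S k.+1)
    + mu k / 2 * frob (S k.+1 - (Hu - L k.+1 + (mu k)^-1 *: Y k)) ^+ 2
  <= lambda * l1norm S'
    + mu k / 2 * frob (S' - (Hu - L k.+1 + (mu k)^-1 *: Y k)) ^+ 2.
Hypothesis HY : forall k, Y k.+1 = Y k + mu k *: (Hu - L k.+1 - S k.+1).

Let mu_gt0 k : 0 < mu k := lt_le_trans Hmu0 (mu_ge k).

Lemma multiplier_prox k :
  (forall i j, `|Y k.+1 i j| <= lambda) /\
  lambda * l1norm (S k.+1) <= mxdot (Y k.+1) (S k.+1).
Proof.
apply: l1norm_prox_optimality Hlambda (mu_gt0 k) _ (HS k).
by rewrite HY; apply/matrixP => i j; rewrite !mxE; field; rewrite gt_eqF.
Qed.

Lemma multiplier_entry_le k i j : `|Y k i j| <= lambda.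
Proof.
by case: k => [|k]; [rewrite HY0 mxE normr0 ltW | case: (multiplier_prox k)].
Qed.

(* Equal to the residual [Hu - L k.+1 - S k.+1], see [iterate_L_eq]. *)
Definition dual_step k := (mu k)^-1 *: (Y k.+1 - Y k).

Let delta := 2 * (Ns * Nb)%:R * lambda / mu0.

Lemma dual_step_l1norm_le k : l1norm (dual_step k) <= delta.
Proof.
have Y_l1 k' : l1norm (Y k') <= (Ns * Nb)%:R * lambda.
  exact: l1norm_le_entrywise (multiplier_entry_le k').
have dY : l1norm (Y k.+1 - Y k) <= 2 * (Ns * Nb)%:R * lambda.
  by have := l1normB (Y k.+1) (Y k); have := Y_l1 k; have := Y_l1 k.+1; lra.
rewrite l1normZ ger0_norm ?invr_ge0 ?(ltW (mu_gt0 k)) // /delta mulrC.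
apply: ler_pM; rewrite ?invr_ge0 ?l1norm_ge0 ?(ltW (mu_gt0 k)) //.
by rewrite lef_pV2 ?posrE ?mu_gt0.
Qed.

Lemma iterate_L_eq k : L k.+1 = Hu - S k.+1 - dual_step k.
Proof.
rewrite /dual_step HY; apply/matrixP => i j; rewrite !mxE.
by field; rewrite gt_eqF.
Qed.

Let K := l1norm Hu + delta
  + gamma / 2 * (l1norm Hu + delta + l1norm (beta *: L1)) ^+ 2.

Lemma iterate_S_descent k :
  K / lambda <= l1norm (S k.+1) -> frob (S k.+1) <= frob (S k).
Proof.
rewrite ler_pdivrMr // => S_large.
pose G := mu k *: (Hu - S k + (mu k)^-1 *: Y k - L k.+1)
  - (2 * gamma) *: (L k.+1 - beta *: L1).
have [G_le1 GL_ge0] :=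
  nucnorm_prox_optimality Hgamma (mu_gt0 k) (erefl G) (HL k).
have [_ YS_ge] := multiplier_prox k.
have stepE :
    mu k *: (S k.+1 - S k) = G - Y k.+1 + (2 * gamma) *: (L k.+1 - beta *: L1).
  by rewrite HY; apply/matrixP => i j; rewrite !mxE; field; rewrite gt_eqF.
have := admm_sqr_step (ltW (mu_gt0 k)) Hgamma G_le1 GL_ge0 (iterate_L_eq k)
  stepE.
have HD_le : l1norm (Hu - dual_step k) <= l1norm Hu + delta.
  exact: le_trans (l1normB _ _) (lerD (lexx _) (dual_step_l1norm_le k)).
have HDB_le : frob (Hu - dual_step k - beta *: L1)
    <= l1norm Hu + delta + l1norm (beta *: L1).
  apply: le_trans (frob_le_l1norm _) _; apply: le_trans (l1normB _ _) _.
  by rewrite lerD2r.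
have HDB_sqr : gamma / 2 * frob (Hu - dual_step k - beta *: L1) ^+ 2
    <= gamma / 2 * (l1norm Hu + delta + l1norm (beta *: L1)) ^+ 2.
  rewrite ler_wpM2l ?divr_ge0 //.
  by have := frob_ge0 (Hu - dual_step k - beta *: L1); nra.
move=> step_le.
rewrite -ler_sqr ?nnegrE ?frob_ge0 // -subr_le0 -(pmulr_rle0 _ (mu_gt0 k)).
rewrite /K in S_large; lra.
Qed.

Lemma iterates_bounded :
  exists C, forall k, frob (L k.+1) <= C /\ frob (S k) <= C.
Proof.
have delta_ge0 : 0 <= delta by rewrite /delta !mulr_ge0 ?invr_ge0 ?ler0n ?ltW.
have K_ge0 : 0 <= K.
  by rewrite /K !addr_ge0 ?l1norm_ge0 // mulr_ge0 ?divr_ge0 ?sqr_ge0.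
have S_le : forall k, frob (S k) <= K / lambda.
  apply: (bounded_of_descent (x := fun k => frob (S k))
                             (y := fun k => l1norm (S k))).
  - by move=> k; apply: frob_le_l1norm.
  - rewrite /= HS0; apply: le_trans (frob_le_l1norm _) _.
    rewrite /l1norm big1 ?divr_ge0 ?(ltW Hlambda) // => i _.
    by rewrite big1 // => j _; rewrite mxE normr0.
  - by move=> k; apply: iterate_S_descent.
exists (Num.max (K / lambda)
                (l1norm Hu + (Ns * Nb)%:R * (K / lambda) + delta)) => k.
rewrite !le_max S_le; split; last by [].
apply/orP; right; rewrite iterate_L_eq; apply: le_trans (frob_le_l1norm _) _.
apply: le_trans (l1normB _ _) _; apply: lerD; last exact: dual_step_l1norm_le.
apply: le_trans (l1normB _ _) _; rewrite lerD2l.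
apply: le_trans (l1norm_le_entrywise (entry_le_frob (S k.+1))) _.
by apply: ler_wpM2l.
Qed.

End AdmmIterates.

Theorem lemma2 (R : realType) (Ns Nb : nat) (Hu L1 : 'M[R]_(Ns, Nb))
  (lambda gamma beta mu0 rho mumax : R)
  (Hlambda : 0 < lambda) (Hgamma : 0 <= gamma) (Hmu0 : 0 < mu0)
  (Hrho : 1 < rho) (Hmumax : mu0 <= mumax)
  (L S Y : nat -> 'M[R]_(Ns, Nb)) (mu : nat -> R)
  (Hmu_0 : mu 0%N = mu0)
  (Hmu_S : forall k, mu k.+1 = Num.min (rho * mu k) mumax)
  (HS0 : S 0%N = 0) (HY0 : Y 0%N = 0)
  (HL : forall k (L' : 'M[R]_(Ns, Nb)),
     nucnorm (L k.+1) + gamma * frob (L k.+1 - beta *: L1) ^+ 2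
       + mu k / 2 * frob (L k.+1 - (Hu - S k + (mu k)^-1 *: Y k)) ^+ 2
     <= nucnorm L' + gamma * frob (L' - beta *: L1) ^+ 2
       + mu k / 2 * frob (L' - (Hu - S k + (mu k)^-1 *: Y k)) ^+ 2)
  (HS : forall k (S' : 'M[R]_(Ns, Nb)),
     lambda * l1norm (S k.+1)
       + mu k / 2 * frob (S k.+1 - (Hu - L k.+1 + (mu k)^-1 *: Y k)) ^+ 2
     <= lambda * l1norm S'
       + mu k / 2 * frob (S' - (Hu - L k.+1 + (mu k)^-1 *: Y k)) ^+ 2)
  (HY : forall k, Y k.+1 = Y k + mu k *: (Hu - L k.+1 - S k.+1)) :
  exists C : R, forall k, frob (L k) <= C /\ frob (S k) <= C.
Proof.
have mu_ge := clamped_growth_ge (ltW Hmu0) (ltW Hrho) Hmumax Hmu_0 Hmu_S.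
have [C iterates_le] :=
  iterates_bounded Hlambda Hgamma Hmu0 mu_ge HS0 HY0 HL HS HY.
exists (Num.max (frob (L 0%N)) C) => k; rewrite !le_max.
split; last by have [_ ->] := iterates_le k; rewrite orbT.
by case: k => [|k]; [rewrite lexx | have [-> _] := iterates_le k; rewrite orbT].
Qed.
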